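(* Let $k$ be an infinite field of characteristic $0$. If $(L,V)\in\mathrm{Ob}\,\Xi^0$ is a cyclic free representation and $\Phi$ is an automorphism of the category $\Xi^0$, then $\Phi(L,V)$ is also a cyclic free representation.
   Context: Representations $(L,V)$: Lie algebra $L$ over $k$ and $L$-module $V$; homomorphisms $(\varphi,\psi)$ with $\varphi$ a Lie homomorphism, $\psi$ linear, $\varphi(l)\circ\psi(v)=\psi(l\circ v)$. $W(X,Y)=(L(X),A(X)Y)$ is the free representation ($L(X)$ free Lie algebra, $A(X)$ free unital associative algebra on $X$, $A(X)Y$ free $A(X)$-module with basis $Y$). With fixed countably infinite sets $X^0,Y^0$, $\Xi^0$ is the category whose objects are the $W(X,Y)$ with finite $X\subset X^0$, $Y\subset Y^0$ and whose morphisms are all homomorphisms between them. $W(X,Y)$ is called cyclic if $X=\{x\}$ and $Y=\{y\}$ are singletons. *)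

From HB Require Import structures.
From mathcomp Require Import all_boot all_order all_algebra.
From mathcomp Require Import finmap.
Set Implicit Arguments. Unset Strict Implicit. Unset Printing Implicit Defensive.
Import GRing.Theory.
Local Open Scope fset_scope.
Local Open Scope ring_scope.

Section FreeRep.
Variable k : fieldType.

(* Ambient type: noncommutative formal power series over k in the letters
   X^0 = nat; a word is a [seq nat].  A(X) is the subset of those with
   finite support and all letters in X. *)
Definition NC := seq nat -> k.
Definition nczero : NC := fun _ => 0.
Definition ncadd (f g : NC) : NC := fun w => f w + g w.
Definition ncscale (c : k) (f : NC) : NC := fun w => c * f w.
Definition ncmul (f g : NC) : NC :=
  fun w => \sum_(i < (size w).+1) f (take i w) * g (drop i w).
Definition ncX (x : nat) : NC := fun w => if w == [:: x] then 1 else 0.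
Definition ncbr (f g : NC) : NC := fun w => ncmul f g w - ncmul g f w.

Definition inA (X : {fset nat}) (f : NC) : Prop :=
  (exists n, forall w, (n < size w)%N -> f w = 0) /\
  (forall w, f w != 0 -> all (fun x => x \in X) w).

Inductive inL (X : {fset nat}) : NC -> Prop :=
| inL_zero : inL X nczero
| inL_gen x : x \in X -> inL X (ncX x)
| inL_add f g : inL X f -> inL X g -> inL X (ncadd f g)
| inL_scale c f : inL X f -> inL X (ncscale c f)
| inL_br f g : inL X f -> inL X g -> inL X (ncbr f g).

(* free A(X)-module A(X)Y with basis Y (Y^0 = nat): coordinate functions *)
Definition Vec := nat -> NC.
Definition vzero : Vec := fun _ => nczero.
Definition vadd (u v : Vec) : Vec := fun y => ncadd (u y) (v y).
Definition vscale (c : k) (v : Vec) : Vec := fun y => ncscale c (v y).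
Definition inM (X Y : {fset nat}) (v : Vec) : Prop :=
  (forall y, y \in Y -> inA X (v y)) /\ (forall y, y \notin Y -> v y = nczero).
Definition act (l : NC) (v : Vec) : Vec := fun y => ncmul l (v y).

(* objects of Xi^0: W(X,Y) with X, Y finite subsets of nat *)
Definition Obj := ({fset nat} * {fset nat})%type.

(* homomorphisms W(a) -> W(b); maps are normalized to be 0 outside the
   domain so that a homomorphism has a unique representative *)
Definition isHom (a b : Obj) (phi : NC -> NC) (psi : Vec -> Vec) : Prop :=
  [/\ (forall l, inL a.1 l -> inL b.1 (phi l)),
      (forall l, ~ inL a.1 l -> phi l = nczero),
      (forall c l m, inL a.1 l -> inL a.1 m ->
          phi (ncadd (ncscale c l) m) = ncadd (ncscale c (phi l)) (phi m)) &
      (forall l m, inL a.1 l -> inL a.1 m -> phi (ncbr l m) = ncbr (phi l) (phi m))] /\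
  [/\ (forall v, inM a.1 a.2 v -> inM b.1 b.2 (psi v)),
      (forall v, ~ inM a.1 a.2 v -> psi v = vzero),
      (forall c u v, inM a.1 a.2 u -> inM a.1 a.2 v ->
          psi (vadd (vscale c u) v) = vadd (vscale c (psi u)) (psi v)) &
      (forall l v, inL a.1 l -> inM a.1 a.2 v -> act (phi l) (psi v) = psi (act l v))].

Definition XiHom (a b : Obj) :=
  {p : ((NC -> NC) * (Vec -> Vec))%type | isHom a b p.1 p.2}.

Definition isComp (a b c : Obj) (f : XiHom a b) (g : XiHom b c) (h : XiHom a c) : Prop :=
  (forall l, (sval h).1 l = (sval g).1 ((sval f).1 l)) /\
  (forall v, (sval h).2 v = (sval g).2 ((sval f).2 v)).

Definition isId (a : Obj) (f : XiHom a a) : Prop :=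
  (forall l, inL a.1 l -> (sval f).1 l = l) /\
  (forall v, inM a.1 a.2 v -> (sval f).2 v = v).

Definition isCatAut (Fo : Obj -> Obj)
    (Fm : forall a b, XiHom a b -> XiHom (Fo a) (Fo b)) : Prop :=
  [/\ bijective Fo,
      (forall a b, bijective (Fm a b)),
      (forall a (f : XiHom a a), isId f -> isId (Fm _ _ f)) &
      (forall a b c (f : XiHom a b) (g : XiHom b c) (h : XiHom a c),
          isComp f g h -> isComp (Fm _ _ f) (Fm _ _ g) (Fm _ _ h))].

Definition cyclic (a : Obj) : Prop :=
  exists x y : nat, a.1 = [fset x] /\ a.2 = [fset y].

End FreeRep.

From mathcomp Require Import all_boot all_algebra finmap zify.
From Stdlib Require Import FunctionalExtensionality ProofIrrelevance ClassicalEpsilon Classical.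
Set Implicit Arguments. Unset Strict Implicit. Unset Printing Implicit Defensive.
Import GRing.Theory.
Local Open Scope ring_scope.

(** Whether both [X] and [Y] are nonempty is visible in the category: [Hom(a, b)]
    is a singleton exactly when one of [a], [b] has no generators and one of them has no
    basis elements, so [X] and [Y] of [a] are nonempty iff [a] maps nontrivially to two
    objects [b], [c] with [Hom(b, c)] a singleton.  A cyclic [a] is a retract of every
    object with nonempty [X] and [Y], and a retract of a cyclic object with nonempty [X]
    and [Y] is cyclic: through the retraction every generator is a multiple of the image
    of the one generator, and the constant terms of the image of a vector depend only on
    the constant term of its coordinate at the one basis element.  As [a] is
    a retract of [Phi^-1(a)], [Phi(a)] is a retract of [a], hence cyclic.  Neither the
    characteristic nor the cardinality of [k] plays a role. *)

Definition pif (P : Prop) (T : Type) (u v : T) : T :=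
  if excluded_middle_informative P then u else v.

Lemma pifT (P : Prop) (T : Type) (u v : T) : P -> pif P u v = u.
Proof. by rewrite /pif; case: excluded_middle_informative. Qed.

Lemma pifF (P : Prop) (T : Type) (u v : T) : ~ P -> pif P u v = v.
Proof. by rewrite /pif; case: excluded_middle_informative. Qed.

Lemma fset1_eq (A : {fset nat}) z :
  z \in A -> {in A &, forall u v, u = v} -> A = [fset z]%fset.
Proof.
move=> Az Aeq; apply/fsetP => u; rewrite in_fset1.
by apply/idP/eqP => [Au|->//]; exact: Aeq.
Qed.

Definition nonempty_rep (a : Obj) := (a.1 != fset0) && (a.2 != fset0).

Section FreeRepresentations.

Variable k : fieldType.
Implicit Types (f g l m : NC k) (u v : Vec k) (a b : Obj) (c d : k).

Lemma ncscale1 f : ncscale 1 f = f.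
Proof. by apply: functional_extensionality => w; rewrite /ncscale mul1r. Qed.

Lemma ncadd0 f : ncadd f (nczero k) = f.
Proof. by apply: functional_extensionality => w; rewrite /ncadd addr0. Qed.

Lemma ncscale0 c : ncscale c (nczero k) = nczero k.
Proof. by apply: functional_extensionality => w; rewrite /ncscale mulr0. Qed.

Lemma ncmul0r g : ncmul (nczero k) g = nczero k.
Proof. by apply: functional_extensionality => w; apply: big1 => i _; rewrite mul0r. Qed.

Lemma ncmulr0 g : ncmul g (nczero k) = nczero k.
Proof. by apply: functional_extensionality => w; apply: big1 => i _; rewrite mulr0. Qed.

Lemma ncbr0 : ncbr (nczero k) (nczero k) = nczero k.
Proof. by apply: functional_extensionality => w; rewrite /ncbr ncmul0r subrr. Qed.

Lemma ncmulZl c f g : ncmul (ncscale c f) g = ncscale c (ncmul f g).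
Proof.
apply: functional_extensionality => w; rewrite /ncmul /ncscale mulr_sumr.
by apply: eq_bigr => i _; rewrite mulrA.
Qed.

Lemma ncmulZr c f g : ncmul f (ncscale c g) = ncscale c (ncmul f g).
Proof.
apply: functional_extensionality => w; rewrite /ncmul /ncscale mulr_sumr.
by apply: eq_bigr => i _; rewrite mulrCA.
Qed.

Lemma ncmul_nil f g : ncmul f g [::] = f [::] * g [::].
Proof. by rewrite /ncmul big_ord1. Qed.

Lemma ncmul_seq1 f g x : ncmul f g [:: x] = f [::] * g [:: x] + f [:: x] * g [::].
Proof. by rewrite /ncmul big_ord_recr big_ord1. Qed.

Lemma ncbr_seq1 f g x : ncbr f g [:: x] = 0.
Proof.
rewrite /ncbr !ncmul_seq1 [g [::] * _]mulrC [g [:: x] * _]mulrC.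
by rewrite [X in _ - X]addrC subrr.
Qed.

Lemma ncbr_scale c d g : ncbr (ncscale c g) (ncscale d g) = nczero k.
Proof.
rewrite /ncbr !ncmulZl !ncmulZr; apply: functional_extensionality => w.
by rewrite /ncscale mulrCA subrr.
Qed.

Lemma ncmulX_nil x g : ncmul (ncX k x) g [::] = 0.
Proof. by rewrite ncmul_nil mul0r. Qed.

Lemma ncmulX_cons x g z w : ncmul (ncX k x) g (z :: w) = if z == x then g w else 0.
Proof.
rewrite /ncmul big_ord_recl big_ord_recl /= /ncX /= mul0r add0r.
rewrite take0 drop0 eqseq_cons eqxx andbT big1 ?addr0.
  by case: ifP; rewrite ?mul1r ?mul0r.
move=> i _; rewrite eqseq_cons add0n.
have i_le : (bump 0 i <= size w)%N by rewrite /bump add1n ltn_ord.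
have -> : (take (bump 0 i) w == [::]) = false by rewrite -size_eq0 size_takel.
by rewrite andbF mul0r.
Qed.

Definition nc1 : NC k := fun w => if w == [::] then 1 else 0.

Definition ebasis (y : nat) : Vec k := fun y' => if y' == y then nc1 else nczero k.

Lemma inA_out X f w : inA X f -> ~~ all (fun x => x \in X) w -> f w = 0.
Proof. by move=> [_ fX] Xw; apply/eqP; apply: contraNT Xw; exact: fX. Qed.

Lemma inA0 X : inA X (nczero k).
Proof. by split; [exists 0%N | move=> w; rewrite eqxx]. Qed.

Lemma inA1 X : inA X nc1.
Proof.
split; first by exists 0%N => -[].
by case=> [|z w] //=; rewrite /nc1 eqxx.
Qed.

Lemma inA_lin X c f g : inA X f -> inA X g -> inA X (ncadd (ncscale c f) g).
Proof.
move=> Af Ag; split.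
  case: Af Ag => [[n1 f0] _] [[n2 g0] _].
  exists (maxn n1 n2) => w w_gt; rewrite /ncadd /ncscale f0 ?g0 ?mulr0 ?addr0 //; lia.
move=> w; apply: contraNT => Xw.
by rewrite /ncadd /ncscale (inA_out Af Xw) (inA_out Ag Xw) mulr0 addr0.
Qed.

Lemma inA_scale X c f : inA X f -> inA X (ncscale c f).
Proof. by move=> Af; rewrite -[ncscale c f]ncadd0; apply: inA_lin (inA0 X). Qed.

Lemma inA_mul X f g : inA X f -> inA X g -> inA X (ncmul f g).
Proof.
move=> Af Ag; split.
  case: Af Ag => [[n1 f0] _] [[n2 g0] _].
  exists (n1 + n2)%N => w w_gt; apply: big1 => i _.
  have size_w : (size (take i w) + size (drop i w) = size w)%N.
    by rewrite -size_cat cat_take_drop.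
  case: (leqP (size (take i w)) n1) => ?; last by rewrite f0 ?mul0r.
  by rewrite (g0 (drop i w)) ?mulr0 //; lia.
move=> w; apply: contraNT => Xw; apply/eqP/big1 => i _.
have: ~~ all (fun x => x \in X) (take i w ++ drop i w) by rewrite cat_take_drop.
rewrite all_cat negb_and => /orP[Xt|Xd]; first by rewrite (inA_out Af Xt) mul0r.
by rewrite (inA_out Ag Xd) mulr0.
Qed.

Lemma inL_nil X l : inL X l -> l [::] = 0.
Proof.
elim=> // [f g _ f0 _ g0|c f _ f0|f g _ f0 _ g0].
- by rewrite /ncadd f0 g0 addr0.
- by rewrite /ncscale f0 mulr0.
- by rewrite /ncbr !ncmul_nil f0 g0 mul0r subrr.
Qed.

Lemma inL_inA X l : inL X l -> inA X l.
Proof.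
elim=> [|x Xx|f g _ Af _ Ag|c f _ Af|f g _ Af _ Ag].
- exact: inA0.
- split; first by exists 1%N => w w_gt; rewrite /ncX; case: eqP w_gt => // ->.
  by move=> w; rewrite /ncX; case: (eqVneq w [:: x]) => [->|_] /=; rewrite ?Xx ?eqxx.
- by rewrite -[f]ncscale1; apply: inA_lin.
- exact: inA_scale.
- have -> : ncbr f g = ncadd (ncscale (-1) (ncmul g f)) (ncmul f g).
    by apply: functional_extensionality => w; rewrite /ncadd /ncscale /ncbr mulN1r addrC.
  by apply: inA_lin; apply: inA_mul.
Qed.

Lemma inL_fset0 l : inL fset0 l -> l = nczero k.
Proof.
elim=> // [f g _ -> _ ->|c f _ ->|f g _ -> _ ->].
- exact: ncadd0.
- exact: ncscale0.
- exact: ncbr0.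
Qed.

Lemma inL_fset1 x l : inL [fset x]%fset l -> exists c, l = ncscale c (ncX k x).
Proof.
elim=> [|z|f g _ [c ->] _ [d ->]|c f _ [d ->]|f g _ [c ->] _ [d ->]].
- by exists 0; apply: functional_extensionality => w; rewrite /ncscale mul0r.
- by rewrite in_fset1 => /eqP ->; exists 1; rewrite ncscale1.
- by exists (c + d); apply: functional_extensionality => w; rewrite /ncadd /ncscale mulrDl.
- by exists (c * d); apply: functional_extensionality => w; rewrite /ncscale mulrA.
- exists 0; rewrite ncbr_scale.
  by apply: functional_extensionality => w; rewrite /ncscale mul0r.
Qed.

Lemma inM0 X Y : inM X Y (vzero k).
Proof. by split=> // y _; exact: inA0. Qed.

Lemma inM_inA X Y v y : inM X Y v -> inA X (v y).
Proof.
by move=> [vA v0]; case: (boolP (y \in Y)) => [/vA //|/v0 ->]; exact: inA0.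
Qed.

Lemma inM_lin X Y c u v : inM X Y u -> inM X Y v -> inM X Y (vadd (vscale c u) v).
Proof.
move=> [uA u0] [vA v0]; split=> y Yy; first exact: inA_lin (uA y Yy) (vA y Yy).
by rewrite /vadd /vscale u0 // v0 // ncscale0 ncadd0.
Qed.

Lemma inM_act X Y l v : inL X l -> inM X Y v -> inM X Y (act l v).
Proof.
move=> Ll [vA v0]; split=> y Yy; rewrite /act; last by rewrite v0 // ncmulr0.
exact: inA_mul (inL_inA Ll) (vA y Yy).
Qed.

Lemma inM_ebasis X Y y : y \in Y -> inM X Y (ebasis y).
Proof.
move=> Yy; split=> y' Yy'; rewrite /ebasis; case: eqP => [Ey|_] //.
- exact: inA1.
- exact: inA0.
- by move: Yy'; rewrite Ey Yy.
Qed.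

Lemma inM_fset0 X v : inM X fset0 v -> v = vzero k.
Proof. by move=> [_ v0]; apply: functional_extensionality => y; exact: v0. Qed.

Definition mkHom a b (phi : NC k -> NC k) (psi : Vec k -> Vec k)
  (H : isHom a b phi psi) : XiHom k a b := exist _ (phi, psi) H.

Lemma hom_eq a b (f g : XiHom k a b) : sval f = sval g -> f = g.
Proof. by case: f g => [p Hp] [q Hq] /= Epq; subst q; rewrite (proof_irrelevance _ Hp Hq). Qed.

Lemma hom_phi0 a b (f : XiHom k a b) : (sval f).1 (nczero k) = nczero k.
Proof.
have [[_ _ phi_lin _] _] := svalP f.
have := phi_lin (-1) _ _ (inL_zero k a.1) (inL_zero k a.1).
rewrite ncscale0 ncadd0 => ->.
by apply: functional_extensionality => w; rewrite /ncadd /ncscale mulN1r addNr.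
Qed.

Lemma hom_psi0 a b (f : XiHom k a b) : (sval f).2 (vzero k) = vzero k.
Proof.
have [_ [_ _ psi_lin _]] := svalP f.
have := psi_lin (-1) _ _ (inM0 a.1 a.2) (inM0 a.1 a.2).
have -> : vadd (vscale (-1) (vzero k)) (vzero k) = vzero k.
  by apply: functional_extensionality => y; rewrite /vadd /vscale ncscale0 ncadd0.
move=> ->; apply: functional_extensionality => y; apply: functional_extensionality => w.
by rewrite /vadd /vscale /ncadd /ncscale mulN1r addNr.
Qed.

Lemma hom_phiZ a b (f : XiHom k a b) c l :
  inL a.1 l -> (sval f).1 (ncscale c l) = ncscale c ((sval f).1 l).
Proof.
move=> Ll; have [[_ _ phi_lin _] _] := svalP f.
by have := phi_lin c l _ Ll (inL_zero k a.1); rewrite !ncadd0 hom_phi0 ncadd0.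
Qed.

Lemma comp_isHom a b e (f : XiHom k a b) (g : XiHom k b e) :
  isHom a e (fun l => (sval g).1 ((sval f).1 l)) (fun v => (sval g).2 ((sval f).2 v)).
Proof.
have [[fL f0 f_lin f_br] [fM f0' f_lin' f_act]] := svalP f.
have [[gL _ g_lin g_br] [gM _ g_lin' g_act]] := svalP g.
split; split.
- by move=> l /fL /gL.
- by move=> l /f0 ->; rewrite hom_phi0.
- by move=> c l m Ll Lm; rewrite f_lin // g_lin //; apply: fL.
- by move=> l m Ll Lm; rewrite f_br // g_br //; apply: fL.
- by move=> v /fM /gM.
- by move=> v /f0' ->; rewrite hom_psi0.
- by move=> c u v Mu Mv; rewrite f_lin' // g_lin' //; apply: fM.
- by move=> l v Ll Mv; rewrite g_act ?f_act //; [apply: fL | apply: fM].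
Qed.

Definition comp a b e (f : XiHom k a b) (g : XiHom k b e) : XiHom k a e :=
  mkHom (comp_isHom f g).

Definition retract_of a b :=
  exists (s : XiHom k a b) (r : XiHom k b a) (h : XiHom k a a), isComp s r h /\ isId h.

Definition hom_subsingleton a b := forall f g : XiHom k a b, f = g.

Lemma zero_isHom a b : isHom a b (fun _ => nczero k) (fun _ => vzero k).
Proof.
split; split=> //.
- by move=> *; apply: inL_zero.
- by move=> *; rewrite ncscale0 ncadd0.
- by move=> *; rewrite ncbr0.
- by move=> *; apply: inM0.
- by move=> *; apply: functional_extensionality => y; rewrite /vadd /vscale ncscale0 ncadd0.
- by move=> *; apply: functional_extensionality => y; rewrite /act ncmulr0.
Qed.

Lemma hom_subsingleton_fset0 a b :
  (a.1 == fset0) || (b.1 == fset0) -> (a.2 == fset0) || (b.2 == fset0) ->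
  hom_subsingleton a b.
Proof.
move=> X0 Y0; suff zero_f : forall f : XiHom k a b, sval f = sval (mkHom (zero_isHom a b)).
  by move=> f g; apply: hom_eq; rewrite !zero_f.
move=> f; have [[fL f0 _ _] [fM f0' _ _]] := svalP f.
rewrite [sval f]surjective_pairing; congr pair.
  apply: functional_extensionality => l; case: (classic (inL a.1 l)) => [Ll|]; last exact: f0.
  case/orP: X0 => /eqP X0; last by have := fL _ Ll; rewrite X0 => /inL_fset0.
  by move: Ll; rewrite X0 => /inL_fset0 ->; rewrite hom_phi0.
apply: functional_extensionality => v; case: (classic (inM a.1 a.2 v)) => [Mv|]; last exact: f0'.
case/orP: Y0 => /eqP Y0; last by have := fM _ Mv; rewrite Y0 => /inM_fset0.
by move: Mv; rewrite Y0 => /inM_fset0 ->; rewrite hom_psi0.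
Qed.

Definition coeff_phi (X : {fset nat}) (x0 x1 : nat) l : NC k :=
  pif (inL X l) (ncscale (l [:: x0]) (ncX k x1)) (nczero k).

Lemma coeff_isHom a b x0 x1 : x1 \in b.1 ->
  isHom a b (coeff_phi a.1 x0 x1) (fun _ => vzero k).
Proof.
move=> bx1; split; split=> //.
- by move=> l Ll; rewrite /coeff_phi pifT //; apply/inL_scale/inL_gen.
- by move=> l Ll; rewrite /coeff_phi pifF.
- move=> c l m Ll Lm; rewrite /coeff_phi !pifT //; last exact/inL_add/Lm/inL_scale.
  by apply: functional_extensionality => w; rewrite /ncadd /ncscale mulrDl mulrA.
- move=> l m Ll Lm; rewrite /coeff_phi !pifT ?ncbr_scale ?ncbr_seq1 //; last exact: inL_br.
  by apply: functional_extensionality => w; rewrite /ncscale mul0r.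
- by move=> *; apply: inM0.
- by move=> *; apply: functional_extensionality => y; rewrite /vadd /vscale ncscale0 ncadd0.
- by move=> *; apply: functional_extensionality => y; rewrite /act ncmulr0.
Qed.

Lemma hom_nonsubsingleton_X a b x0 x1 :
  x0 \in a.1 -> x1 \in b.1 -> ~ hom_subsingleton a b.
Proof.
move=> ax0 bx1 /(_ (mkHom (zero_isHom a b)) (mkHom (coeff_isHom a x0 bx1))).
move/(congr1 (fun h => (sval h).1 (ncX k x0) [:: x1])) => /=.
rewrite /coeff_phi pifT; last exact: inL_gen.
by rewrite /ncscale /ncX /nczero !eqxx mul1r => /eqP; rewrite eq_sym oner_eq0.
Qed.

Definition const_psi (X Y : {fset nat}) (y0 y1 : nat) v : Vec k :=
  pif (inM X Y v) (fun y => if y == y1 then ncscale (v y0 [::]) nc1 else nczero k) (vzero k).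

Lemma const_isHom a b y0 y1 : y1 \in b.2 ->
  isHom a b (fun _ => nczero k) (const_psi a.1 a.2 y0 y1).
Proof.
move=> by1; split; split=> //.
- by move=> *; apply: inL_zero.
- by move=> *; rewrite ncscale0 ncadd0.
- by move=> *; rewrite ncbr0.
- move=> v Mv; rewrite /const_psi pifT //; split=> y Yy; case: eqP => [Ey|_] //.
  + exact/inA_scale/inA1.
  + exact: inA0.
  + by move: Yy; rewrite Ey by1.
- by move=> v Mv; rewrite /const_psi pifF.
- move=> c u v Mu Mv; rewrite /const_psi !pifT //; last exact: inM_lin.
  apply: functional_extensionality => y; rewrite /vadd /vscale /=.
  case: ifP => _; last by rewrite ncscale0 ncadd0.
  by apply: functional_extensionality => w; rewrite /ncadd /ncscale mulrDl mulrA.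
- move=> l v Ll Mv; rewrite /const_psi !pifT //; last exact: inM_act.
  apply: functional_extensionality => y; rewrite /act /= ncmul0r ncmul_nil (inL_nil Ll) mul0r.
  by case: ifP => // _; apply: functional_extensionality => w; rewrite /ncscale mul0r.
Qed.

Lemma hom_nonsubsingleton_Y a b y0 y1 :
  y0 \in a.2 -> y1 \in b.2 -> ~ hom_subsingleton a b.
Proof.
move=> ay0 by1 /(_ (mkHom (zero_isHom a b)) (mkHom (const_isHom a y0 by1))).
move/(congr1 (fun h => (sval h).2 (ebasis y0) y1 [::])) => /=.
rewrite /const_psi pifT; last exact: inM_ebasis.
by rewrite /ncscale /ebasis /nc1 /vzero /nczero !eqxx mul1r => /eqP; rewrite eq_sym oner_eq0.
Qed.

Lemma hom_subsingletonP a b :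
  hom_subsingleton a b <->
  ((a.1 == fset0) || (b.1 == fset0)) && ((a.2 == fset0) || (b.2 == fset0)).
Proof.
split=> [sub|/andP[]]; last exact: hom_subsingleton_fset0.
apply/andP; split; apply/negPn/negP; rewrite negb_or => /andP[/fset0Pn[z az] /fset0Pn[z' bz']].
  exact: hom_nonsubsingleton_X az bz' sub.
exact: hom_nonsubsingleton_Y az bz' sub.
Qed.

Definition branching a :=
  exists b e, [/\ ~ hom_subsingleton a b, ~ hom_subsingleton a e & hom_subsingleton b e].

Lemma branchingP a : branching a <-> nonempty_rep a.
Proof.
split=> [[b [e []]]|/andP[X0 Y0]].
  rewrite !hom_subsingletonP /nonempty_rep.
  by case: (a.1 == fset0) (a.2 == fset0) (b.1 == fset0) (b.2 == fset0)
    (e.1 == fset0) (e.2 == fset0) => [] [] [] [] [] [].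
exists (a.1, fset0), (fset0, a.2).
by split; rewrite hom_subsingletonP /= eqxx ?orbT ?(negbTE X0) ?(negbTE Y0).
Qed.

(* The algebra morphism sending the letter [x0] to [x1] and every other letter to 0. *)
Definition ren (x0 x1 : nat) f : NC k :=
  fun w => if all (pred1 x1) w then f (nseq (size w) x0) else 0.

Lemma ren_lin x0 x1 c f g :
  ren x0 x1 (ncadd (ncscale c f) g) = ncadd (ncscale c (ren x0 x1 f)) (ren x0 x1 g).
Proof.
apply: functional_extensionality => w; rewrite /ren /ncadd /ncscale.
by case: ifP; rewrite ?mulr0 ?addr0.
Qed.

Lemma ren0 x0 x1 : ren x0 x1 (nczero k) = nczero k.
Proof. by apply: functional_extensionality => w; rewrite /ren if_same. Qed.

Lemma renZ x0 x1 c f : ren x0 x1 (ncscale c f) = ncscale c (ren x0 x1 f).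
Proof. by rewrite -[ncscale c f]ncadd0 ren_lin ren0 !ncadd0. Qed.

Lemma renD x0 x1 f g : ren x0 x1 (ncadd f g) = ncadd (ren x0 x1 f) (ren x0 x1 g).
Proof. by have := ren_lin x0 x1 1 f g; rewrite !ncscale1. Qed.

Lemma ren_mul x0 x1 f g : ren x0 x1 (ncmul f g) = ncmul (ren x0 x1 f) (ren x0 x1 g).
Proof.
apply: functional_extensionality => w; rewrite /ren /ncmul size_nseq.
case: ifP => w1.
  apply: eq_bigr => i _; have i_le : (i <= size w)%N by rewrite -ltnS ltn_ord.
  move: w1; rewrite -{1}(cat_take_drop i w) all_cat => /andP[-> ->].
  by rewrite take_nseq // drop_nseq size_takel // size_drop.
apply/esym/big1 => i _; move: w1; rewrite -{1}(cat_take_drop i w) all_cat.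
by case: (all _ (take i w)) (all _ (drop i w)) => [] [] //= _; rewrite ?mul0r ?mulr0.
Qed.

Lemma ren_br x0 x1 f g : ren x0 x1 (ncbr f g) = ncbr (ren x0 x1 f) (ren x0 x1 g).
Proof.
rewrite /ncbr -!ren_mul; apply: functional_extensionality => w.
by rewrite /ren; case: ifP; rewrite ?subrr.
Qed.

Lemma ren_X x0 x1 z : ren x0 x1 (ncX k z) = if z == x0 then ncX k x1 else nczero k.
Proof.
apply: functional_extensionality => w; rewrite /ren /ncX.
have [->|zx0] := eqVneq z x0; case: w => [|z' [|z'' w]] //=;
  by rewrite /nczero !eqseq_cons /= ?andbT ?andbF ?eqxx ?if_same // [x0 == z]eq_sym (negbTE zx0) if_same.
Qed.

Lemma ren_inL X X' x0 x1 l : x1 \in X' -> inL X l -> inL X' (ren x0 x1 l).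
Proof.
move=> X'x1; elim=> [|z _|f g _ Lf _ Lg|c f _ Lf|f g _ Lf _ Lg].
- by rewrite ren0; apply: inL_zero.
- by rewrite ren_X; case: ifP => _; [apply: inL_gen | apply: inL_zero].
- by rewrite renD; apply: inL_add.
- by rewrite renZ; apply: inL_scale.
- by rewrite ren_br; apply: inL_br.
Qed.

Lemma ren_inA X X' x0 x1 f : x1 \in X' -> inA X f -> inA X' (ren x0 x1 f).
Proof.
move=> X'x1 [[n f0] _]; split.
  by exists n => w w_gt; rewrite /ren; case: ifP => // _; apply: f0; rewrite size_nseq.
move=> w; rewrite /ren; case: ifP => [w1 _|_]; last by rewrite eqxx.
by apply/allP => z /(allP w1) /eqP ->.
Qed.

Lemma renK x0 x1 f : inA [fset x0]%fset f -> ren x1 x0 (ren x0 x1 f) = f.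
Proof.
move=> Af; apply: functional_extensionality => w.
rewrite /ren all_nseq /= eqxx orbT size_nseq.
case: ifP => [/all_pred1P <- //|w0].
apply/esym/(inA_out Af); apply: contraFN w0 => /allP w0.
by apply/allP => z /w0; rewrite in_fset1.
Qed.

Definition ren_phi (X : {fset nat}) x0 x1 l : NC k := pif (inL X l) (ren x0 x1 l) (nczero k).
Definition ren_psi (X Y : {fset nat}) x0 x1 y0 y1 v : Vec k :=
  pif (inM X Y v) (fun y => if y == y1 then ren x0 x1 (v y0) else nczero k) (vzero k).

Lemma ren_isHom a b x0 x1 y0 y1 : x1 \in b.1 -> y1 \in b.2 ->
  isHom a b (ren_phi a.1 x0 x1) (ren_psi a.1 a.2 x0 x1 y0 y1).
Proof.
move=> bx1 by1; split; split.
- by move=> l Ll; rewrite /ren_phi pifT //; apply: ren_inL Ll.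
- by move=> l Ll; rewrite /ren_phi pifF.
- move=> c l m Ll Lm; rewrite /ren_phi !pifT ?ren_lin //.
  by apply: inL_add Lm; apply: inL_scale.
- by move=> l m Ll Lm; rewrite /ren_phi !pifT ?ren_br //; apply: inL_br.
- move=> v Mv; rewrite /ren_psi pifT //; split=> y Yy; case: eqP => [Ey|_] //.
  + exact: ren_inA (inM_inA _ Mv).
  + exact: inA0.
  + by move: Yy; rewrite Ey by1.
- by move=> v Mv; rewrite /ren_psi pifF.
- move=> c u v Mu Mv; rewrite /ren_psi !pifT //; last exact: inM_lin.
  apply: functional_extensionality => y; rewrite /vadd /vscale.
  by case: ifP => _; rewrite ?ren_lin ?ncscale0 ?ncadd0.
- move=> l v Ll Mv; rewrite /ren_psi /ren_phi !pifT //; last exact: inM_act.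
  by apply: functional_extensionality => y; rewrite /act; case: ifP; rewrite ?ren_mul ?ncmulr0.
Qed.

(* Rename the generator and the basis element of [a] into [b] and back. *)
Lemma cyclic_retract a b : cyclic a -> nonempty_rep b -> retract_of a b.
Proof.
move=> [x [y [a1 a2]]] /andP[/fset0Pn[x0 bx0] /fset0Pn[y0 by0]].
have ax : x \in a.1 by rewrite a1 in_fset1.
have ay : y \in a.2 by rewrite a2 in_fset1.
pose s := mkHom (@ren_isHom a b x x0 y y0 bx0 by0).
pose r := mkHom (@ren_isHom b a x0 x y0 y ax ay).
exists s, r, (comp s r); split=> //; split=> [l Ll|v Mv] /=.
  have -> : ren_phi a.1 x x0 l = ren x x0 l by rewrite /ren_phi pifT.
  rewrite /ren_phi pifT; last exact: ren_inL Ll.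
  by rewrite renK // -a1; apply: inL_inA.
have Msv : inM b.1 b.2 (ren_psi a.1 a.2 x x0 y y0 v).
  by have [_ [sM _ _ _]] := svalP s; apply: sM.
rewrite {1}/ren_psi pifT //; rewrite /ren_psi pifT //.
apply: functional_extensionality => y'; rewrite eqxx; case: eqP => [->|/eqP y'y].
  by rewrite renK // -a1; apply: inM_inA Mv.
by case: Mv => _ ->; rewrite // a2 in_fset1.
Qed.

(* Every generator of [a] is a multiple of the image of the generator of [e]. *)
Lemma retract_cyclic_X a e x :
  e.1 = [fset x]%fset -> retract_of a e -> {in a.1 &, forall x1 x2, x1 = x2}.
Proof.
move=> e1 [s [r [h [[rs _] [h_id _]]]]] x1 x2 ax1 ax2.
have [[sL _ _ _] _] := svalP s.
have gen_mul : forall z, z \in a.1 -> exists c, ncX k z = ncscale c ((sval r).1 (ncX k x)).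
  move=> z az; have Lz : inL a.1 (ncX k z) by apply: inL_gen.
  have := sL _ Lz; rewrite e1 => /inL_fset1 [c sz]; exists c.
  by rewrite -[ncX k z](h_id _ Lz) rs sz hom_phiZ // e1; apply/inL_gen/fset11.
apply/eqP/negPn/negP => x12.
have [[c1 E1] [c2 E2]] := (gen_mul _ ax1, gen_mul _ ax2).
set u := (sval r).1 _ in E1 E2.
move: (congr1 (fun f => f [:: x1]) E1) (congr1 (fun f => f [:: x1]) E2).
move: (congr1 (fun f => f [:: x2]) E2).
rewrite /ncX /ncscale /= !eqseq_cons !andbT !eqxx (negbTE x12).
move=> E22 E11 /esym/eqP; rewrite mulf_eq0 => /orP[/eqP c2_0|/eqP u1].
  by move: E22; rewrite c2_0 mul0r => /eqP; rewrite oner_eq0.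
by move: E11; rewrite u1 mulr0 => /eqP; rewrite oner_eq0.
Qed.

(* Split [v = v_y(1) e_y + x v']: the second summand is sent to [r(x) r(v')], which has
   no constant term because Lie elements have none. *)
Lemma cyclic_hom_psi_nil a e x y (r : XiHom k e a) v y' :
  e.1 = [fset x]%fset -> e.2 = [fset y]%fset -> inM e.1 e.2 v ->
  (sval r).2 v y' [::] = v y [::] * (sval r).2 (ebasis y) y' [::].
Proof.
move=> e1 e2 Mv; have [[rL _ _ _] [_ _ r_lin r_act]] := svalP r.
have ey : y \in e.2 by rewrite e2 in_fset1.
have Lx : inL e.1 (ncX k x) by rewrite e1; apply/inL_gen/fset11.
pose v' : Vec k := fun y'' => if y'' == y then (fun w => v y (x :: w)) else nczero k.
have Mv' : inM e.1 e.2 v'.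
  split=> y'' ey''; rewrite /v'; case: eqP => [Ey|_] //.
  - have [[n v0] vX] := inM_inA y Mv; split.
      by exists n => w w_gt; apply: v0 => /=; lia.
    by move=> w /vX /andP[].
  - exact: inA0.
  - by move: ey''; rewrite Ey ey.
have v_split : v = vadd (vscale (v y [::]) (ebasis y)) (act (ncX k x) v').
  apply: functional_extensionality => y''; apply: functional_extensionality => w.
  rewrite /vadd /vscale /act /ncadd /ncscale /ebasis /v'.
  case: (eqVneq y'' y) => [->|y''y]; last first.
    by rewrite ncmulr0 mulr0 addr0; case: Mv => _ ->; rewrite // e2 in_fset1.
  case: w => [|z w]; first by rewrite ncmulX_nil /nc1 eqxx mulr1 addr0.
  rewrite ncmulX_cons /nc1 /= mulr0 add0r; case: (eqVneq z x) => [->//|zx].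
  by apply: (inA_out (inM_inA y Mv)); rewrite e1 /= in_fset1 (negbTE zx).
rewrite {1}v_split r_lin; [|exact: inM_ebasis|exact: inM_act].
rewrite -(r_act _ _ Lx Mv').
by rewrite /vadd /vscale /ncadd /ncscale /act ncmul_nil (inL_nil (rL _ Lx)) mul0r addr0.
Qed.

Lemma retract_cyclic_Y a e x y :
  e.1 = [fset x]%fset -> e.2 = [fset y]%fset -> retract_of a e ->
  {in a.2 &, forall y1 y2, y1 = y2}.
Proof.
move=> e1 e2 [s [r [h [[_ rs] [_ h_id]]]]] y1 y2 ay1 ay2.
have [_ [sM _ _ _]] := svalP s.
have ebasis_nil : forall z, z \in a.2 -> forall y',
    ebasis z y' [::] = (sval s).2 (ebasis z) y [::] * (sval r).2 (ebasis y) y' [::].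
  move=> z az y'; have Mz := @inM_ebasis a.1 a.2 z az.
  by rewrite -{1}(h_id _ Mz) rs; apply: cyclic_hom_psi_nil e1 e2 (sM _ Mz).
apply/eqP/negPn/negP => y12.
move: (ebasis_nil _ ay1 y1) (ebasis_nil _ ay1 y2) (ebasis_nil _ ay2 y2).
rewrite /ebasis /nc1 !eqxx [y2 == y1]eq_sym (negbTE y12).
move=> E11 /esym/eqP; rewrite mulf_eq0 => /orP[/eqP c0|/eqP r0].
  by move: E11; rewrite c0 mul0r => /eqP; rewrite oner_eq0.
by rewrite r0 mulr0 => /eqP; rewrite oner_eq0.
Qed.

Lemma retract_cyclic a e : cyclic e -> retract_of a e -> nonempty_rep a -> cyclic a.
Proof.
move=> [x [y [e1 e2]]] ae /andP[/fset0Pn[x' ax'] /fset0Pn[y' ay']].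
exists x', y'; split; apply: fset1_eq => //.
- exact: retract_cyclic_X e1 ae.
- exact: retract_cyclic_Y e1 e2 ae.
Qed.

End FreeRepresentations.

Section CategoryAutomorphism.

Variables (k : fieldType) (Fo : Obj -> Obj).
Variable Fm : forall a b, XiHom k a b -> XiHom k (Fo a) (Fo b).
Hypothesis Faut : isCatAut Fm.

Lemma catAut_hom_subsingleton a b :
  hom_subsingleton k (Fo a) (Fo b) <-> hom_subsingleton k a b.
Proof.
have [_ Fm_bij _ _] := Faut; have [g FmK gK] := Fm_bij a b.
by split=> sub f f'; [apply: (can_inj FmK) | apply: (can_inj gK)]; apply: sub.
Qed.

Lemma catAut_branching a : branching k (Fo a) <-> branching k a.
Proof.
have [[g _ gK] _ _ _] := Faut.
split=> [[b [e [ab ae be]]]|[b [e [ab ae be]]]].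
  exists (g b), (g e); split.
  - by move/(catAut_hom_subsingleton a (g b)); rewrite gK.
  - by move/(catAut_hom_subsingleton a (g e)); rewrite gK.
  - by apply/(catAut_hom_subsingleton (g b) (g e)); rewrite !gK.
by exists (Fo b), (Fo e); split; rewrite catAut_hom_subsingleton.
Qed.

Lemma catAut_nonempty a : nonempty_rep (Fo a) = nonempty_rep a.
Proof.
by apply/idP/idP => /(branchingP k) ?; apply/(branchingP k)/catAut_branching.
Qed.

Lemma catAut_retract a b : retract_of k a b -> retract_of k (Fo a) (Fo b).
Proof.
have [_ _ Fm_id Fm_comp] := Faut.
move=> [s [r [h [srh h_id]]]].
by exists (Fm s), (Fm r), (Fm h); split; [apply: Fm_comp | apply: Fm_id].
Qed.

End CategoryAutomorphism.

Theorem proposition6 (k : fieldType)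
    (Hchar : [pchar k] =i pred0)
    (Hinf : forall s : seq k, exists x : k, x \notin s)
    (Fo : Obj -> Obj) (Fm : forall a b, XiHom k a b -> XiHom k (Fo a) (Fo b))
    (a : Obj) :
  isCatAut Fm -> cyclic a -> cyclic (Fo a).
Proof.
move=> Faut cyc_a; have [[g _ gK] _ _ _] := Faut.
have a_ne : nonempty_rep a.
  case: cyc_a => [x [y [a1 a2]]]; rewrite /nonempty_rep a1 a2.
  by apply/andP; split; apply/fset0Pn; [exists x | exists y]; apply: fset11.
have ga_ne : nonempty_rep (g a) by rewrite -(catAut_nonempty Faut) gK.
have Fa_retract : retract_of k (Fo a) a.
  by rewrite -{2}(gK a); apply: catAut_retract Faut _ _ (cyclic_retract k cyc_a ga_ne).
by apply: retract_cyclic cyc_a Fa_retract _; rewrite (catAut_nonempty Faut).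
Qed.
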